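(* For all $u_1,u_2\in[0,1]$: (i) $\lim_{\lambda\to\infty}C_\lambda(u_1,u_2)=\max\{u_1+u_2-1,0\}$ (the Fréchet–Hoeffding lower bound); (ii) $\lim_{\lambda\to-\infty}C_\lambda(u_1,u_2)=\min\{u_1,u_2\}$ (the Fréchet–Hoeffding upper bound).
   Context: For $\lambda\in\mathbb{R}$ define $\phi_\lambda$ on $[0,\infty)$ by $\phi_\lambda(x)=\frac{1}{\lambda(\lambda+1)}(x^{\lambda+1}-x+\lambda(1-x))$ for $\lambda\neq-1,0$; $\phi_0(x)=1-x+x\log x$; $\phi_{-1}(x)=x-1-\log x$; values at $x=0$ are limits, so $\phi_\lambda(0)=1/(\lambda+1)$ for $\lambda>-1$ and $\phi_\lambda(0)=\infty$ for $\lambda\le-1$. On $[0,1]$, $\phi_\lambda$ is convex, strictly decreasing, $\phi_\lambda(1)=0$. The pseudoinverse is $\phi_\lambda^{[-1]}(t)=\phi_\lambda^{-1}(t)$ (inverse of $\phi_\lambda|_{[0,1]}$) for $0\le t<\phi_\lambda(0)$ and $0$ for $t\ge\phi_\lambda(0)$. The power-divergence (PD) copula is $C_\lambda(u_1,u_2)=\phi_\lambda^{[-1]}(\phi_\lambda(u_1)+\phi_\lambda(u_2))$, $u_1,u_2\in[0,1]$ (with $\phi_\lambda^{[-1]}(\infty)=0$). *)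

From Stdlib Require Import Reals Lra ClassicalEpsilon.
From Coquelicot Require Import Coquelicot.
Open Scope R_scope.

Definition phi (lam x : R) : Rbar :=
  if Rlt_dec 0 x then
    if Req_EM_T lam 0 then Finite (1 - x + x * ln x)
    else if Req_EM_T lam (-1) then Finite (x - 1 - ln x)
    else Finite ((Rpower x (lam + 1) - x + lam * (1 - x)) / (lam * (lam + 1)))
  else (* x = 0: limit value *)
    if Rlt_dec (-1) lam then Finite (1 / (lam + 1)) else p_infty.

(* Pseudoinverse: the inverse of phi_lambda restricted to [0,1] where it is
   defined (0 <= t < phi_lambda(0)); 0 otherwise (t >= phi_lambda(0), t = +oo). *)
Definition phi_pinv (lam : R) (t : Rbar) : R :=
  match t with
  | Finite t' =>
      match excluded_middle_informative
              (exists x : R, 0 <= x <= 1 /\ phi lam x = Finite t') with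
      | left H => proj1_sig (constructive_indefinite_description _ H)
      | right _ => 0
      end
  | _ => 0
  end.

Definition PD_copula (lam u1 u2 : R) : R :=
  phi_pinv lam (Rbar_plus (phi lam u1) (phi lam u2)).

From Stdlib Require Import Reals Lra Psatz ClassicalEpsilon.
From Coquelicot Require Import Coquelicot.
Open Scope R_scope.

(* Off lambda in {0, -1}, phi_lambda = N_lambda / (lambda (lambda + 1)) with
   N_lambda(x) = x^(lambda+1) - x + lambda (1 - x), so the copula value
   x = C_lambda(u1, u2) solves N_lambda(x) = N_lambda(u1) + N_lambda(u2)
   whenever this equation has a solution in [0, 1] (and is 0 otherwise).  As lambda -> +oo,
   N_lambda(x) = lambda (1 - x) + O(1), which forces
   lambda (x - (u1 + u2 - 1)) = O(1).  As lambda -> -oo the power term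
   dominates: for u1 <= u2 the equation pins x^(lambda+1) between
   u1^(lambda+1) - O(|lambda|) and 2 u1^(lambda+1) + O(|lambda|), and since
   the ratio (u1 / v)^(lambda+1) grows exponentially in |lambda| for v <> u1,
   x is squeezed to u1. *)

(* At [x = 0] we store the limit value [lambda] (valid for [lambda > -1]);
   the formula itself would give [1 + lambda] there, since [ln 0 = 0]. *)
Definition phi_num (lam x : R) : R :=
  if Rlt_dec 0 x then exp ((lam + 1) * ln x) - x + lam * (1 - x) else lam.

Lemma phi_num_pos lam x : 0 < x ->
  phi_num lam x = exp ((lam + 1) * ln x) - x + lam * (1 - x).
Proof. intros Hx. unfold phi_num. destruct (Rlt_dec 0 x); [reflexivity | lra]. Qed.

Lemma phi_num_one lam : phi_num lam 1 = 0.
Proof. rewrite phi_num_pos by lra. rewrite ln_1, Rmult_0_r, exp_0. ring. Qed.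

Lemma phi_finite lam x : lam <> 0 -> lam <> -1 -> 0 <= x -> (0 < x \/ -1 < lam) ->
  phi lam x = Finite (phi_num lam x / (lam * (lam + 1))).
Proof.
  intros H0 H1 Hx Hdom. unfold phi, phi_num, Rpower.
  destruct (Rlt_dec 0 x).
  - destruct (Req_EM_T lam 0); [lra |]. destruct (Req_EM_T lam (-1)); [lra |].
    reflexivity.
  - destruct (Rlt_dec (-1) lam); [| lra]. f_equal. field. lra.
Qed.

Lemma phi_zero lam : lam <= -1 -> phi lam 0 = p_infty.
Proof.
  intros H. unfold phi. destruct (Rlt_dec 0 0); [lra |].
  destruct (Rlt_dec (-1) lam); [lra | reflexivity].
Qed.

Lemma phi_neq_m_infty lam x : phi lam x <> m_infty.
Proof.
  unfold phi. repeat destruct (Rlt_dec _ _); repeat destruct (Req_EM_T _ _);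
  discriminate.
Qed.

Lemma PD_copula_comm lam u1 u2 : PD_copula lam u1 u2 = PD_copula lam u2 u1.
Proof. unfold PD_copula. now rewrite Rbar_plus_comm. Qed.

Lemma PD_copula_0l lam u : lam <= -1 -> PD_copula lam 0 u = 0.
Proof.
  intros H. unfold PD_copula. rewrite phi_zero by exact H.
  destruct (phi lam u) eqn:E; try reflexivity.
  now destruct (phi_neq_m_infty lam u).
Qed.

Lemma PD_copula_ind lam u1 u2 (P : R -> Prop) :
  lam <> 0 -> lam <> -1 -> 0 <= u1 -> 0 <= u2 ->
  (0 < u1 \/ -1 < lam) -> (0 < u2 \/ -1 < lam) ->
  (forall x, 0 <= x <= 1 -> (0 < x \/ -1 < lam) ->
     phi_num lam x = phi_num lam u1 + phi_num lam u2 -> P x) ->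
  (~ (exists x, 0 <= x <= 1 /\ (0 < x \/ -1 < lam) /\
        phi_num lam x = phi_num lam u1 + phi_num lam u2) -> P 0) ->
  P (PD_copula lam u1 u2).
Proof.
  intros H0 H1 Hu1 Hu2 D1 D2 Hsol Hnone.
  assert (HK : lam * (lam + 1) <> 0)
    by (apply Rmult_integral_contrapositive; split; lra).
  assert (HT : Rbar_plus (phi lam u1) (phi lam u2)
               = Finite ((phi_num lam u1 + phi_num lam u2) / (lam * (lam + 1)))).
  { rewrite !phi_finite by assumption. simpl. f_equal. field. split; lra. }
  unfold PD_copula, phi_pinv. rewrite HT.
  destruct (excluded_middle_informative _) as [Hex | Hex].
  - destruct (constructive_indefinite_description _ Hex) as [x [Hx Hphi]]. simpl.
    assert (Dx : 0 < x \/ -1 < lam).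
    { destruct (Rlt_dec 0 x) as [Hpos | Hpos]; [now left |].
      destruct (Rlt_dec (-1) lam) as [Hlam | Hlam]; [now right |].
      replace x with 0 in Hphi by lra. rewrite phi_zero in Hphi by lra.
      discriminate. }
    apply Hsol; [exact Hx | exact Dx |].
    rewrite phi_finite in Hphi by (try exact Dx; lra). injection Hphi as Hphi.
    unfold Rdiv in Hphi. apply Rmult_eq_reg_r in Hphi; [exact Hphi |].
    now apply Rinv_neq_0_compat.
  - apply Hnone. intros [x [Hx [Dx Hnum]]]. apply Hex. exists x. split; [exact Hx |].
    rewrite phi_finite by (try exact Dx; lra). now rewrite Hnum.
Qed.

Lemma ln_le_sub_1 y : 0 < y -> ln y <= y - 1.
Proof. intros Hy. pose proof (exp_ineq1_le (ln y)) as H. rewrite exp_ln in H; lra. Qed.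

Lemma exp_le a b : a <= b -> exp a <= exp b.
Proof. intros [H | H]; [left; now apply exp_increasing | subst; lra]. Qed.

Lemma exp_mul_ln_antitone p x y : p <= 0 -> 0 < x <= y ->
  exp (p * ln y) <= exp (p * ln x).
Proof.
  intros Hp Hxy. assert (ln x <= ln y) by (apply ln_le; lra).
  apply exp_le. nra.
Qed.

Lemma exp_mul_ln_ge_1 p y : p <= 0 -> 0 < y <= 1 -> 1 <= exp (p * ln y).
Proof.
  intros Hp Hy. rewrite <- exp_0. replace 0 with (p * ln 1) by (rewrite ln_1; ring).
  apply exp_mul_ln_antitone; lra.
Qed.

Lemma bernoulli_exp_ln r x : (1 <= r \/ r <= 0) -> 0 < x ->
  1 + r * (x - 1) <= exp (r * ln x).
Proof.
  intros [Hr | Hr] Hx.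
  - set (w := 1 + r * (x - 1)).
    destruct (Rle_lt_dec w 0) as [Hw | Hw]; [pose proof (exp_pos (r * ln x)); lra |].
    (* [ln w <= r ln x] follows from [ln t <= t - 1] at [t = w / x] and [t = 1 / x]. *)
    assert (Hwx : ln w - ln x <= w / x - 1).
    { rewrite <- ln_div by lra. apply ln_le_sub_1, Rdiv_lt_0_compat; lra. }
    assert (Hx1 : - ln x <= / x - 1).
    { rewrite <- ln_Rinv by lra. apply ln_le_sub_1, Rinv_0_lt_compat; lra. }
    assert (Hsum : w / x - 1 + (r - 1) * (/ x - 1) = 0) by (unfold w; field; lra).
    assert (Hln : ln w <= r * ln x).
    { assert ((r - 1) * (- ln x) <= (r - 1) * (/ x - 1))
        by (apply Rmult_le_compat_l; lra).
      lra. }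
    apply exp_le in Hln. rewrite exp_ln in Hln by lra. exact Hln.
  - pose proof (exp_ineq1_le (r * ln x)). pose proof (ln_le_sub_1 x Hx).
    assert (r * (x - 1) <= r * ln x) by (apply Rmult_le_compat_neg_l; lra). lra.
Qed.

Lemma phi_num_ge0 lam x : (0 <= lam \/ lam <= -1) -> 0 < x -> 0 <= phi_num lam x.
Proof.
  intros Hlam Hx. rewrite phi_num_pos by exact Hx.
  pose proof (bernoulli_exp_ln (lam + 1) x ltac:(lra) Hx). nra.
Qed.

Lemma phi_num_ivt lam d T : 0 < d <= 1 -> 0 <= T <= phi_num lam d ->
  exists x, d <= x <= 1 /\ phi_num lam x = T.
Proof.
  intros Hd HT.
  destruct (Req_dec T 0) as [E | E]; [exists 1; rewrite phi_num_one; split; lra |].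
  destruct (Req_dec T (phi_num lam d)) as [E' | E']; [exists d; split; lra |].
  assert (Hd1 : d < 1) by (destruct (Req_dec d 1); [subst; rewrite phi_num_one in HT |]; lra).
  set (g x := T - (exp ((lam + 1) * ln x) - x + lam * (1 - x))).
  destruct (Ranalysis5.IVT_interv g d 1) as [x [Hx Hgx]].
  - intros a Ha. apply continuity_pt_filterlim, (ex_derive_continuous g).
    unfold g. auto_derive. lra.
  - exact Hd1.
  - unfold g. rewrite <- phi_num_pos by lra. lra.
  - unfold g. rewrite <- phi_num_pos, phi_num_one by lra. lra.
  - exists x. split; [lra |]. rewrite phi_num_pos by lra. unfold g in Hgx. lra.
Qed.

Lemma phi_num_bounds_pos lam x : 0 < lam -> 0 <= x <= 1 ->
  lam * (1 - x) - 1 <= phi_num lam x <= lam * (1 - x) /\ 0 <= phi_num lam x.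
Proof.
  intros Hlam Hx. destruct (Rlt_dec 0 x) as [Hpos | Hpos].
  - pose proof (phi_num_ge0 lam x ltac:(lra) Hpos).
    rewrite phi_num_pos in * by exact Hpos.
    assert (Hpow : exp ((lam + 1) * ln x) <= x).
    { rewrite <- (exp_ln x) at 2 by exact Hpos. apply exp_le.
      assert (ln x <= 0) by (rewrite <- ln_1; apply ln_le; lra). nra. }
    pose proof (exp_pos ((lam + 1) * ln x)). split; [split |]; nra.
  - replace x with 0 by lra. unfold phi_num. destruct (Rlt_dec 0 0); [lra |].
    split; [split |]; lra.
Qed.

Lemma PD_copula_dist_lower_bound lam u1 u2 : 2 <= lam -> 0 <= u1 <= 1 -> 0 <= u2 <= 1 ->
  Rabs (PD_copula lam u1 u2 - Rmax (u1 + u2 - 1) 0) <= 4 / lam.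
Proof.
  intros Hlam Hu1 Hu2.
  set (a := u1 + u2 - 1).
  assert (H4 : lam * (4 / lam) = 4) by (field; lra).
  destruct (phi_num_bounds_pos lam u1) as [[A1 B1] C1]; try lra.
  destruct (phi_num_bounds_pos lam u2) as [[A2 B2] C2]; try lra.
  apply PD_copula_ind; try lra.
  - intros x Hx _ Hsum.
    destruct (phi_num_bounds_pos lam x) as [[A3 B3] _]; try lra.
    assert (Hup : lam * (x - a) <= 2) by (unfold a; nra).
    assert (Hlo : -1 <= lam * (x - a)) by (unfold a; nra).
    unfold Rmax. destruct (Rle_dec a 0); apply Rabs_le; split; nra.
  - intros Hnone.
    assert (Ha : a < 4 / lam).
    { destruct (Rlt_le_dec a (4 / lam)) as [h | h]; [exact h | exfalso].
      apply Hnone.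
      assert (H2 : lam * (2 / lam) = 2) by (field; lra).
      assert (Hd : 0 < 2 / lam <= 1) by (split; [apply Rdiv_lt_0_compat | nra]; lra).
      destruct (phi_num_ivt lam (2 / lam) (phi_num lam u1 + phi_num lam u2))
        as [x [Hx Hnum]]; [exact Hd | | exists x; split; [lra | split; [lra | exact Hnum]]].
      destruct (phi_num_bounds_pos lam (2 / lam)) as [[A3 _] _]; try lra.
      split; [lra |]. unfold a in h. nra. }
    assert (0 < 4 / lam) by (apply Rdiv_lt_0_compat; lra).
    unfold Rmax. destruct (Rle_dec a 0); apply Rabs_le; split; lra.
Qed.

Lemma PD_copula_lim_p_infty u1 u2 : 0 <= u1 <= 1 -> 0 <= u2 <= 1 ->
  is_lim (fun lam => PD_copula lam u1 u2) p_infty (Rmax (u1 + u2 - 1) 0).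
Proof.
  intros Hu1 Hu2. apply is_lim_spec. intros eps. pose proof (cond_pos eps) as Heps.
  exists (Rmax 2 (4 / eps)). intros lam Hlam.
  pose proof (Rmax_l 2 (4 / eps)). pose proof (Rmax_r 2 (4 / eps)).
  eapply Rle_lt_trans; [apply PD_copula_dist_lower_bound; lra |].
  apply Rlt_div_l; [lra |]. rewrite Rmult_comm. apply Rlt_div_l; lra.
Qed.

Lemma phi_num_bounds_neg lam y : lam <= -1 -> 0 < y <= 1 ->
  exp ((lam + 1) * ln y) + lam <= phi_num lam y <= exp ((lam + 1) * ln y) - 1.
Proof. intros Hlam Hy. rewrite phi_num_pos by lra. split; nra. Qed.

Lemma exp_ge_quadratic z : 0 <= z -> 1 + z + z * z / 4 <= exp z.
Proof.
  intros Hz. replace (exp z) with (exp (z / 2) * exp (z / 2))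
    by (rewrite <- exp_plus; f_equal; field).
  pose proof (exp_ineq1_le (z / 2)). nra.
Qed.

Lemma exp_ge_linear q d : 0 < d -> 1 <= q -> 8 < q * (d * d) -> q + 2 <= exp (q * d).
Proof. intros Hd Hq Hqd. pose proof (exp_ge_quadratic (q * d) ltac:(nra)). nra. Qed.

Lemma exp_gap q c d : 0 < c -> 0 < d -> 0 < q -> 2 < q * (c * d) ->
  exp (q * c) + 2 * q < exp (q * (c + d)).
Proof.
  intros Hc Hd Hq Hqcd.
  replace (q * (c + d)) with (q * c + q * d) by ring. rewrite exp_plus.
  pose proof (exp_ineq1_le (q * c)). pose proof (exp_ineq1_le (q * d)).
  assert (q * c * (q * d) <= exp (q * c) * (exp (q * d) - 1))
    by (apply Rmult_le_compat; nra).
  nra.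
Qed.

Lemma PD_copula_neg_solves lam u1 u2 : lam < -9 -> 0 < u1 <= u2 -> u2 <= 1 ->
  0 < PD_copula lam u1 u2 <= 1 /\
  phi_num lam (PD_copula lam u1 u2) = phi_num lam u1 + phi_num lam u2.
Proof.
  intros Hlam Hu Hu2.
  apply PD_copula_ind; try lra.
  - intros x Hx [Hpos | Hpos] Hsum; [split; [lra | exact Hsum] | lra].
  - intros Hnone. exfalso. apply Hnone.
    pose proof (phi_num_bounds_neg lam u1 ltac:(lra) ltac:(lra)).
    pose proof (phi_num_bounds_neg lam u2 ltac:(lra) ltac:(lra)).
    pose proof (phi_num_ge0 lam u1 ltac:(lra) ltac:(lra)).
    pose proof (phi_num_ge0 lam u2 ltac:(lra) ltac:(lra)).
    assert (HE2 : exp ((lam + 1) * ln u2) <= exp ((lam + 1) * ln u1))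
      by (apply exp_mul_ln_antitone; lra).
    set (q := - (lam + 1)).
    set (E1 := exp ((lam + 1) * ln u1)) in *.
    assert (HE1 : 1 <= E1) by (apply exp_mul_ln_ge_1; lra).
    (* At [d = u1 / e] the power term is [e^q E1], already larger than the target. *)
    set (d := u1 * exp (-1)).
    assert (Hexp : 0 < exp (-1) < 1)
      by (split; [apply exp_pos | rewrite <- exp_0; apply exp_increasing; lra]).
    assert (Hd : 0 < d <= 1) by (unfold d; split; nra).
    assert (Hpow : exp ((lam + 1) * ln d) = E1 * exp (q * 1)).
    { unfold d, E1, q. rewrite ln_mult, ln_exp, <- exp_plus by lra. f_equal. ring. }
    pose proof (exp_ge_linear q 1 ltac:(lra) ltac:(unfold q; lra) ltac:(unfold q; lra)).
    pose proof (phi_num_bounds_neg lam d ltac:(lra) Hd) as [Hnd _].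
    rewrite Hpow in Hnd.
    assert (E1 * (q + 2) <= E1 * exp (q * 1)) by (apply Rmult_le_compat_l; lra).
    destruct (phi_num_ivt lam d (phi_num lam u1 + phi_num lam u2)) as [x [Hx Hnum]].
    + exact Hd.
    + assert (q <= E1 * q) by (unfold q; nra).
      split; [lra |]. unfold q in *. lra.
    + exists x. split; [lra | split; [left; lra | exact Hnum]].
Qed.

Lemma phi_num_sum_bounds_neg lam u1 u2 x : lam <= -1 -> 0 < u1 <= u2 -> u2 <= 1 ->
  0 < x <= 1 -> phi_num lam x = phi_num lam u1 + phi_num lam u2 ->
  exp ((lam + 1) * ln u1) + 2 * (lam + 1) <= exp ((lam + 1) * ln x) <=
  2 * exp ((lam + 1) * ln u1) - 2 - lam.
Proof.
  intros Hlam Hu Hu2 Hx Hsum.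
  pose proof (phi_num_bounds_neg lam u1 Hlam ltac:(lra)).
  pose proof (phi_num_bounds_neg lam u2 Hlam ltac:(lra)).
  pose proof (phi_num_bounds_neg lam x Hlam Hx).
  pose proof (exp_mul_ln_ge_1 (lam + 1) u2 ltac:(lra) ltac:(lra)).
  assert (exp ((lam + 1) * ln u2) <= exp ((lam + 1) * ln u1))
    by (apply exp_mul_ln_antitone; lra).
  lra.
Qed.

Lemma PD_copula_neg_eventually_le u1 u2 v : 0 < u1 <= u2 -> u2 <= 1 -> u1 < v ->
  Rbar_locally' m_infty (fun lam => PD_copula lam u1 u2 <= v).
Proof.
  intros Hu Hu2 Hv.
  destruct (Rle_lt_dec 1 v) as [Hv1 | Hv1].
  { exists (-9). intros lam Hlam.
    destruct (PD_copula_neg_solves lam u1 u2) as [Hc _]; lra. }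
  assert (Hlnv : ln v < 0) by (rewrite <- ln_1; apply ln_increasing; lra).
  assert (Hlnuv : ln u1 < ln v) by (apply ln_increasing; lra).
  set (c := - ln v). set (d := ln v - ln u1).
  assert (Hcd : 0 < c * d) by (unfold c, d; nra).
  exists (Rmin (-9) (-1 - 2 / (c * d))). intros lam Hlam.
  pose proof (Rmin_l (-9) (-1 - 2 / (c * d))). pose proof (Rmin_r (-9) (-1 - 2 / (c * d))).
  set (q := - (lam + 1)).
  assert (Hq : 2 < q * (c * d)).
  { apply Rlt_div_l; [exact Hcd |]. unfold q. lra. }
  destruct (PD_copula_neg_solves lam u1 u2) as [Hx Hsum]; try lra.
  set (x := PD_copula lam u1 u2) in *.
  destruct (Rle_lt_dec x v) as [Hxv | Hxv]; [exact Hxv | exfalso].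
  destruct (phi_num_sum_bounds_neg lam u1 u2 x) as [Hlo _]; try lra.
  assert (Hxc : exp ((lam + 1) * ln x) <= exp (q * c)).
  { replace (q * c) with ((lam + 1) * ln v) by (unfold q, c; ring).
    apply exp_mul_ln_antitone; lra. }
  assert (Hu1 : exp ((lam + 1) * ln u1) = exp (q * (c + d)))
    by (f_equal; unfold q, c, d; ring).
  pose proof (exp_gap q c d ltac:(unfold c; lra) ltac:(unfold d; lra)
    ltac:(unfold q; lra) Hq).
  unfold q in *. lra.
Qed.

Lemma PD_copula_neg_eventually_ge u1 u2 w : 0 < u1 <= u2 -> u2 <= 1 -> w < u1 ->
  Rbar_locally' m_infty (fun lam => w <= PD_copula lam u1 u2).
Proof.
  intros Hu Hu2 Hw.
  destruct (Rle_lt_dec w 0) as [Hw0 | Hw0].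
  { exists (-9). intros lam Hlam.
    destruct (PD_copula_neg_solves lam u1 u2) as [Hc _]; lra. }
  assert (Hlnwu : ln w < ln u1) by (apply ln_increasing; lra).
  set (d := ln u1 - ln w).
  assert (Hd : 0 < d) by (unfold d; lra).
  exists (Rmin (-9) (-1 - 8 / (d * d))). intros lam Hlam.
  pose proof (Rmin_l (-9) (-1 - 8 / (d * d))). pose proof (Rmin_r (-9) (-1 - 8 / (d * d))).
  set (q := - (lam + 1)).
  assert (Hq : 8 < q * (d * d)).
  { apply Rlt_div_l; [nra |]. unfold q. lra. }
  destruct (PD_copula_neg_solves lam u1 u2) as [Hx Hsum]; try lra.
  set (x := PD_copula lam u1 u2) in *.
  destruct (Rle_lt_dec w x) as [Hwx | Hxw]; [exact Hwx | exfalso].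
  destruct (phi_num_sum_bounds_neg lam u1 u2 x) as [_ Hup]; try lra.
  set (E1 := exp ((lam + 1) * ln u1)) in *.
  assert (HE1 : 1 <= E1) by (apply exp_mul_ln_ge_1; lra).
  assert (Hxw' : E1 * exp (q * d) <= exp ((lam + 1) * ln x)).
  { replace (E1 * exp (q * d)) with (exp ((lam + 1) * ln w))
      by (unfold E1; rewrite <- exp_plus; f_equal; unfold q, d; ring).
    apply exp_mul_ln_antitone; lra. }
  pose proof (exp_ge_linear q d Hd ltac:(unfold q; lra) Hq).
  assert (E1 * (q + 2) <= E1 * exp (q * d)) by (apply Rmult_le_compat_l; lra).
  assert (q <= E1 * q) by (unfold q; nra).
  unfold q in *. lra.
Qed.

Lemma PD_copula_lim_m_infty u1 u2 : 0 <= u1 <= u2 -> u2 <= 1 ->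
  is_lim (fun lam => PD_copula lam u1 u2) m_infty u1.
Proof.
  intros Hu Hu2. apply is_lim_spec. intros eps. pose proof (cond_pos eps) as Heps.
  destruct (Req_dec u1 0) as [Hu0 | Hu0].
  - subst u1. exists (-1). intros lam Hlam. rewrite PD_copula_0l by lra.
    rewrite Rminus_0_r, Rabs_R0. exact Heps.
  - eapply filter_imp; [| apply filter_and;
      [ apply (PD_copula_neg_eventually_le u1 u2 (u1 + eps / 2))
      | apply (PD_copula_neg_eventually_ge u1 u2 (u1 - eps / 2)) ]]; try lra.
    intros lam [Hle Hge]. apply Rabs_def1; lra.
Qed.

Theorem proposition3 (u1 u2 : R) (hu1 : 0 <= u1 <= 1) (hu2 : 0 <= u2 <= 1) :
  is_lim (fun lam => PD_copula lam u1 u2) p_infty (Finite (Rmax (u1 + u2 - 1) 0)) /\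
  is_lim (fun lam => PD_copula lam u1 u2) m_infty (Finite (Rmin u1 u2)).
Proof.
  split; [now apply PD_copula_lim_p_infty |].
  destruct (Rle_dec u1 u2) as [Hle | Hlt].
  - rewrite Rmin_left by exact Hle. apply PD_copula_lim_m_infty; lra.
  - rewrite Rmin_right by lra.
    apply (is_lim_ext (fun lam => PD_copula lam u2 u1)); [intros lam; apply PD_copula_comm |].
    apply PD_copula_lim_m_infty; lra.
Qed.
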